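(* Let $k\ge 2$ be an integer and let $J$ be a $k$-januarial. Then every vertex of the common graph $\Upsilon$ of $J$ has even valency.
   Context: Let $\Delta(2,k,\ell)=\langle x,y:x^2=y^k=(xy)^\ell=1\rangle$, acting on a finite set $S$. The coset graph has: - vertex set $S$; - an undirected $x$-edge joining each pair of points transposed by $x$ (points fixed by $x$ carry no $x$-edge); - a directed $y$-edge $u\to uy$. It is $2$-cell embedded in a closed orientable surface via the rotation system (incoming $y$-edge, outgoing $y$-edge, $x$-edge) at each vertex. The faces are $y$-faces (boundary label $y^n$, $n\mid k$) and $xy$-faces (boundary label $(xy)^m$). This is the coset diagram. A $k$-januarial is the coset diagram of an action of $\Delta(2,k,\ell)$, for some $\ell$, in which $\langle xy\rangle$ has exactly two orbits, each of size $|S|/2$. Let $S_1,S_2$ be the closures of its two $xy$-faces. Collapsing each $y$-face to a point gives the companion graph/diagram, in which the $x$-edges become edges between the collapsed $y$-faces. Let $S_i'$ be the image of $S_i$. The common graph is $\Upsilon=S_1'\cap S_2'$. *)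

From mathcomp Require Import all_boot all_fingroup.
Set Implicit Arguments. Unset Strict Implicit. Unset Printing Implicit Defensive.
Local Open Scope group_scope.

Section CosetDiagram.
Variable T : finType.

(* Right action: u |-> u x = x u, and
   (x * y) u = y (x u) (mathcomp's permM), i.e. u(xy). *)
Definition Delta_action (k l : nat) (x y : {perm T}) : Prop :=
  [/\ x ^+ 2 = 1, y ^+ k = 1 & (x * y) ^+ l = 1].

(* The xy-faces of the coset diagram correspond to the orbits of <xy>. *)
Definition xy_faces (x y : {perm T}) : {set {set T}} := porbits (x * y).

Definition januarial (k : nat) (x y : {perm T}) : Prop :=
  [/\ exists l, (0 < l)%N /\ Delta_action k l x y,
      #|xy_faces x y| = 2
    & forall O, O \in xy_faces x y -> (#|O| * 2)%N = #|T| ].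

(* The x-edge at u (only meaningful when x u != u): the pair {u, ux}. *)
Definition x_edge (x : {perm T}) (u : T) : {set T} := [set u; x u].

(* Closure S_O of the xy-face O: its boundary walk is u, ux, uxy, uxyx, ...
   for u in O, so its vertices are O together with O x, and its x-edges are
   the x-edges {u, ux} with u in O (and ux != u). *)
Definition face_vertices (x : {perm T}) (O : {set T}) : {set T} :=
  O :|: [set x u | u in O].
Definition face_xedges (x : {perm T}) (O : {set T}) : {set {set T}} :=
  [set x_edge x u | u in O & x u != u].

(* Companion diagram: each y-face (y-orbit) is collapsed to a point, so the
   vertex u of the coset diagram goes to its y-orbit, and the x-edge {u, ux}
   becomes an edge between porbit y u and porbit y (x u).  The image S_O' of
   S_O has vertices the y-orbits of the vertices of S_O and edges the images
   of the x-edges of S_O (y-edges collapse into vertices). *)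
Definition companion_face_vertices (x y : {perm T}) (O : {set T})
  : {set {set T}} := [set porbit y u | u in face_vertices x O].

Definition common_vertices (x y : {perm T}) (O1 O2 : {set T})
  : {set {set T}} :=
  companion_face_vertices x y O1 :&: companion_face_vertices x y O2.
Definition common_edges (x : {perm T}) (O1 O2 : {set T}) : {set {set T}} :=
  face_xedges x O1 :&: face_xedges x O2.

(* Valency of the vertex Y (a y-orbit) in Upsilon: the number of edge-ends
   (darts) at Y, i.e. the number of endpoints u (with u in Y) of edges
   {u, ux} of Upsilon; a loop contributes 2. *)
Definition common_valency (x y : {perm T}) (O1 O2 : {set T}) (Y : {set T})
  : nat :=
  #|[set u | [&& porbit y u == Y, x u != u & x_edge x u \in common_edges x O1 O2]]|.

End CosetDiagram.

From mathcomp Require Import all_boot all_fingroup.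
Set Implicit Arguments. Unset Strict Implicit. Unset Printing Implicit Defensive.

(* Write s := xy.  Since (u x) s = u x x y = u y, the points u x and u y
   always lie in the same xy-face.  When there are only two xy-faces O1 and
   O2, the x-edge {u, u x} lies in both face closures exactly when u and u x,
   i.e. u and u y, lie in different faces.  Hence the valency of a collapsed
   y-face Y in the common graph counts the positions where the cyclic
   sequence u, u y, u y^2, ... running around Y passes from one face to the
   other, and a cyclic sequence with two values changes value an even number
   of times. *)

Section ParityOfChanges.
Variable T : finType.

Lemma odd_card_symdiff (A B : {set T}) :
  odd #|(A :\: B) :|: (B :\: A)| = odd #|A| (+) odd #|B|.
Proof.
have disjointD : (A :\: B) :&: (B :\: A) = set0.
  by apply/setP => u; rewrite !inE; case: (u \in A); case: (u \in B).
rewrite cardsU disjointD cards0 subn0 oddD.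
by rewrite -(cardsID B A) -(cardsID A B) setIC !oddD addbACA addbb.
Qed.

Lemma even_card_perm_changes (s : {perm T}) (f : pred T) (Y : {set T}) :
  (forall u, (s u \in Y) = (u \in Y)) ->
  ~~ odd #|[set u in Y | f u != f (s u)]|.
Proof.
move=> sY; pose A := [set u in Y | f u]; pose B := s @^-1: A.
have -> : [set u in Y | f u != f (s u)] = (A :\: B) :|: (B :\: A).
  apply/setP => u; rewrite !inE sY.
  by case: (u \in Y); case: (f u); case: (f (s u)).
by rewrite odd_card_symdiff card_preimset ?addbb //; apply: perm_inj.
Qed.

Lemma porbit_perm1 (s : {perm T}) u : porbit s (s u) = porbit s u.
Proof. by have := porbit_perm s 1 u; rewrite expg1. Qed.

Lemma mem_porbit_perm1 (s : {perm T}) u w :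
  (s u \in porbit s w) = (u \in porbit s w).
Proof. by rewrite -!eq_porbit_mem porbit_perm1. Qed.

Lemma mem_porbits (s : {perm T}) (O : {set T}) u :
  O \in porbits s -> (u \in O) = (porbit s u == O).
Proof. by case/imsetP=> a _ ->; rewrite eq_porbit_mem. Qed.

Lemma porbits_card2_memC (s : {perm T}) (O1 O2 : {set T}) :
  #|porbits s| = 2 -> O1 \in porbits s -> O2 \in porbits s -> O1 != O2 ->
  forall u, (u \in O2) = (u \notin O1).
Proof.
move=> card2 O1s O2s O1neqO2 u.
have porbitsE : porbits s = [set O1; O2].
  apply/esym/eqP; rewrite eqEcard card2 cards2 O1neqO2 andbT.
  by apply/subsetP => O; rewrite !inE => /orP[] /eqP ->.
have : porbit s u \in porbits s by apply: imset_f.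
rewrite (mem_porbits u O1s) (mem_porbits u O2s) porbitsE !inE.
by case/orP => /eqP ->; rewrite eqxx ?(negbTE O1neqO2) // eq_sym (negbTE O1neqO2).
Qed.

End ParityOfChanges.

Section TwoFacedDiagram.
Variables (T : finType) (x y : {perm T}).
Hypothesis x_invol : (x ^+ 2 = 1)%g.

Lemma permx_invol : involutive x.
Proof. by move=> u; rewrite -permM -expg2 x_invol perm1. Qed.

Lemma mem_x_edge_face_xedges (O : {set T}) u : x u != u ->
  (x_edge x u \in face_xedges x O) = (u \in O) || (x u \in O).
Proof.
move=> xu_neq_u; apply/imsetP/orP => [[v] | [uO | xuO]].
- rewrite inE => /andP[vO _] edge_eq.
  have : v \in x_edge x u by rewrite edge_eq !inE eqxx.
  by rewrite !inE => /orP[] /eqP <-; [left | right].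
- by exists u; rewrite // inE uO xu_neq_u.
- exists (x u); first by rewrite inE xuO permx_invol eq_sym xu_neq_u.
  by rewrite /x_edge permx_invol setUC.
Qed.

Lemma xy_face_memx (O : {set T}) u :
  O \in xy_faces x y -> (x u \in O) = (y u \in O).
Proof.
move=> Oface; rewrite !(mem_porbits _ Oface) -[in RHS](permx_invol u).
by rewrite -permM porbit_perm1.
Qed.

Variables O1 O2 : {set T}.
Hypotheses (two_faces : #|xy_faces x y| = 2)
  (O1face : O1 \in xy_faces x y) (O2face : O2 \in xy_faces x y)
  (O1neqO2 : O1 != O2).

Lemma common_valencyE w :
  common_valency x y O1 O2 (porbit y w)
  = #|[set u in porbit y w | (u \in O1) != (y u \in O1)]|.
Proof.
apply: eq_card => u; rewrite !inE eq_porbit_mem.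
case: (u \in porbit y w) => //=.
case: (eqVneq (x u) u) => [xu_eq_u | xu_neq_u] /=.
  by rewrite -(xy_face_memx u O1face) xu_eq_u eqxx.
have memO2 := porbits_card2_memC two_faces O1face O2face O1neqO2.
rewrite !mem_x_edge_face_xedges // !memO2 (xy_face_memx u O1face).
by case: (u \in O1); case: (y u \in O1).
Qed.

End TwoFacedDiagram.

Theorem proposition2 (T : finType) (k : nat) (x y : {perm T}) :
  (2 <= k)%N -> januarial k x y ->
  forall O1 O2 : {set T},
    O1 \in xy_faces x y -> O2 \in xy_faces x y -> O1 != O2 ->
  forall Y : {set T}, Y \in common_vertices x y O1 O2 ->
    ~~ odd (common_valency x y O1 O2 Y).
Proof.
move=> _ [[l [_ [x_invol _ _]]] two_faces _] O1 O2 O1face O2face O1neqO2 Y.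
case/setIP => /imsetP[w _ ->] _.
rewrite (common_valencyE x_invol two_faces O1face O2face O1neqO2).
by apply: even_card_perm_changes => u; apply: mem_porbit_perm1.
Qed.
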